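(* As formal power series, coefficientwise modulo $4$, \[ \sum_{n=0}^\infty pl_4(n)q^n\equiv (1+q+2q^2+q^3+3q^5+2q^6+3q^7+3q^8)\sum_{n=0}^\infty pl_2(n)q^{2n}\pmod 4. \]
   Context: For a positive integer $k$, $pl_k(n)$ denotes the number of $k$-component plane partitions of $n$ (plane partitions of $n$ all of whose entries are $\le k$), with $pl_k(0)=1$ and $pl_k(n)=0$ for $n<0$; equivalently $\sum_{n\ge0}pl_k(n)q^n=\prod_{n=1}^{\infty}(1-q^n)^{-\min(k,n)}$. *)

From HB Require Import structures.
From mathcomp Require Import all_boot all_order all_algebra.
Set Implicit Arguments. Unset Strict Implicit. Unset Printing Implicit Defensive.
Import GRing.Theory Num.Theory.
Local Open Scope ring_scope.

(* Truncation at degree n of prod_{m>=1} (1-q^m)^{-min(k,m)}: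
   prod_{m=1}^{n} (sum_{j=0}^{n} q^(m j))^(min(k,m)).
   Its coefficient of q^n equals that of the full infinite product,
   since all omitted terms have degree > n. *)
Definition pl_trunc (k n : nat) : {poly int} :=
  \prod_(1 <= m < n.+1) (\sum_(j < n.+1) 'X^(m * j)) ^+ (minn k m).

(* pl_k(n): number of k-component plane partitions of n, defined by the
   generating function  sum_n pl_k(n) q^n = prod_{n>=1} (1-q^n)^{-min(k,n)}. *)
Definition pl (k n : nat) : int := (pl_trunc k n)`_n.

Definition cpoly : seq int := [:: 1; 1; 2; 1; 0; 3; 2; 3; 3].

Definition pl2_even (n : nat) : int := if odd n then 0 else pl 2 n./2.

Definition rhs_coef (n : nat) : int :=
  \sum_(i < 9 | (i <= n)%N) cpoly`_i * pl2_even (n - i).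

From mathcomp Require Import all_boot all_order all_algebra.
From mathcomp Require Import ring.
Import GRing.Theory Num.Theory.
Local Open Scope ring_scope.

(* Modulo 4 one has (1 - x)^4 = (1 - x^2)^2, so for m >= 4 the factor
   (1 - q^m)^min(4,m) of 1 / sum pl_4(n) q^n agrees with the factor
   (1 - q^(2m))^min(2,m) of 1 / sum pl_2(n) q^(2n).  Only the factors with
   m <= 3 differ, and a direct computation shows that the polynomial
   1 + q + 2q^2 + q^3 + 3q^5 + 2q^6 + 3q^7 + 3q^8 corrects for them.  All
   series are handled through polynomials agreeing up to a given degree. *)

Section Truncation.

Context {R : comNzRingType}.
Implicit Types (p q : {poly R}) (k m N : nat).

Definition eq_upto N p q := forall i, (i <= N)%N -> p`_i = q`_i.

Lemma eq_upto_sym N p q : eq_upto N p q -> eq_upto N q p.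
Proof. by move=> hpq i hi; rewrite hpq. Qed.

Lemma eq_upto_trans N p q r : eq_upto N p q -> eq_upto N q r -> eq_upto N p r.
Proof. by move=> hpq hqr i hi; rewrite hpq // hqr. Qed.

Lemma eq_upto_le M N p q : (M <= N)%N -> eq_upto N p q -> eq_upto M p q.
Proof. by move=> hMN hpq i hi; apply: hpq; apply: leq_trans hMN. Qed.

Lemma eq_upto_mul N p p' q q' :
  eq_upto N p p' -> eq_upto N q q' -> eq_upto N (p * q) (p' * q').
Proof.
move=> hp hq i hi; rewrite !coefM; apply: eq_bigr => j _.
have hj : (j <= i)%N by rewrite -ltnS.
by rewrite hp ?hq //; apply: leq_trans hi; [exact: leq_subr | exact: hj].
Qed.

Lemma eq_upto_exp N p q n : eq_upto N p q -> eq_upto N (p ^+ n) (q ^+ n).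
Proof.
by move=> hpq; elim: n => [|n IH]; rewrite ?expr0 // !exprS; apply: eq_upto_mul.
Qed.

Lemma eq_upto_inv_uniq N a b u :
  eq_upto N (a * u) 1 -> eq_upto N (b * u) 1 -> eq_upto N a b.
Proof.
move=> hau hbu.
apply: (@eq_upto_trans _ _ (a * (b * u))).
  by rewrite -[X in eq_upto _ X _]mulr1; apply: eq_upto_mul => //; apply: eq_upto_sym.
rewrite mulrA [a * b]mulrC -mulrA -[X in eq_upto _ _ X]mulr1.
exact: eq_upto_mul.
Qed.

Lemma eq_upto_prod1 N a b (F : nat -> {poly R}) :
  (forall m, (a <= m < b)%N -> eq_upto N (F m) 1) ->
  eq_upto N (\prod_(a <= m < b) F m) 1.
Proof.
move=> hF; rewrite big_nat_cond; elim/big_rec: _ => [i _ //|m p /andP[hm _] hp].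
rewrite -[X in eq_upto _ _ X]mulr1; apply: eq_upto_mul; [exact: hF | exact: hp].
Qed.

Lemma eq_upto_comp_Xn N d p q : (0 < d)%N ->
  eq_upto N p q -> eq_upto N (p \Po 'X^d) (q \Po 'X^d).
Proof.
move=> d_gt0 hpq i hi; rewrite !coef_comp_poly_Xn //; case: ifP => // _.
by apply: hpq; apply: leq_trans (leq_div _ _) hi.
Qed.

Lemma eq_upto_1subXn N m : (N < m)%N -> eq_upto N (1 - 'X^m) 1.
Proof.
move=> hNm i hi; rewrite coefB coefXn coef1.
by rewrite (ltn_eqF (leq_ltn_trans hi hNm)) subr0.
Qed.

Lemma comp_1subXn m d : (1 - 'X^m) \Po 'X^d = 1 - 'X^(m * d) :> {poly R}.
Proof. by rewrite raddfB /= rmorph1 comp_Xn_poly -exprM mulnC. Qed.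

Definition geom_trunc N m : {poly R} := \sum_(j < N.+1) 'X^(m * j).

Lemma mul_1subXn_geom_trunc N m :
  (1 - 'X^m) * geom_trunc N m = 1 - 'X^(m * N.+1).
Proof.
have -> : geom_trunc N m = \sum_(j < N.+1) 'X^m ^+ j.
  by apply: eq_bigr => j _; rewrite exprM.
by rewrite -opprB mulNr -subrX1 -exprM opprB.
Qed.

Definition plgen k N : {poly R} :=
  \prod_(1 <= m < N.+1) geom_trunc N m ^+ minn k m.

Definition plinv k N : {poly R} :=
  \prod_(1 <= m < N.+1) (1 - 'X^m) ^+ minn k m.

Lemma plgen_mul_plinv k N : eq_upto N (plgen k N * plinv k N) 1.
Proof.
rewrite -big_split /=; apply: eq_upto_prod1 => m /andP[m_gt0 _].
rewrite -exprMn -[X in eq_upto _ _ X](expr1n _ (minn k m)); apply: eq_upto_exp.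
rewrite mulrC mul_1subXn_geom_trunc; apply: eq_upto_1subXn.
exact: leq_pmull.
Qed.

Lemma plinv_upto k i N : (i <= N)%N -> eq_upto i (plinv k N) (plinv k i).
Proof.
move=> hiN; rewrite /plinv (@big_cat_nat _ _ _ i.+1) //=.
rewrite -[X in eq_upto _ _ X]mulr1; apply: eq_upto_mul => //.
apply: eq_upto_prod1 => m /andP[him _].
rewrite -[X in eq_upto _ _ X](expr1n _ (minn k m)).
by apply: eq_upto_exp; apply: eq_upto_1subXn.
Qed.

Lemma eq_upto_plgen k N a : eq_upto N (a * plinv k N) 1 -> eq_upto N (plgen k N) a.
Proof. exact: eq_upto_inv_uniq (plgen_mul_plinv k N). Qed.

Lemma plgen_upto k i N : (i <= N)%N -> eq_upto i (plgen k i) (plgen k N).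
Proof.
move=> hiN; apply: eq_upto_plgen.
apply: (@eq_upto_trans _ _ (plgen k N * plinv k N)).
  by apply: eq_upto_mul => //; apply: eq_upto_sym; apply: plinv_upto.
exact: eq_upto_le hiN (plgen_mul_plinv k N).
Qed.

Lemma map_pl_trunc k n : map_poly intr (pl_trunc k n) = plgen k n.
Proof.
rewrite /pl_trunc /plgen rmorph_prod; apply: eq_bigr => m _.
rewrite rmorphXn rmorph_sum; congr (_ ^+ _).
by apply: eq_bigr => j _; apply: map_polyXn.
Qed.

Lemma pl_intr k n : (pl k n)%:~R = (plgen k n)`_n :> R.
Proof. by rewrite -map_pl_trunc coef_map. Qed.

End Truncation.

Lemma one_sub_exp4 (R : comNzRingType) (x : R) :
  4%:R = 0 :> R -> (1 - x) ^+ 4 = (1 - x ^+ 2) ^+ 2.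
Proof.
move=> four0.
have -> : (1 - x) ^+ 4 = (1 - x ^+ 2) ^+ 2 + 4%:R * (- x + 2%:R * x ^+ 2 - x ^+ 3).
  by ring.
by rewrite four0 mul0r addr0.
Qed.

Lemma intr_Zp_eqmod (p : nat) (a b : int) :
  (1 < p)%N -> (a%:~R : 'Z_p) = b%:~R -> (a = b %[mod p])%Z.
Proof.
move=> p_gt1 eq_ab; apply/eqP; rewrite eqz_mod_dvd dvdzE /=.
have : (`|a - b|%N%:R : 'Z_p) = 0.
  by rewrite pmulrn abszEsign intrM intrB eq_ab subrr mulr0.
by move/(congr1 val); rewrite /= val_Zp_nat // => /eqP.
Qed.

Lemma natr4_polyZ4 : 4%:R = 0 :> {poly 'Z_4}.
Proof. by rewrite -polyC_natr pchar_Zp. Qed.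

Definition c4 : {poly 'Z_4} := \sum_(i < 9) (cpoly`_i)%:~R *: 'X^i.

Lemma c4E : c4 = 1 + 'X + 2%:R * 'X^2 + 'X^3 + 3%:R * 'X^5 + 2%:R * 'X^6
                 + 3%:R * 'X^7 + 3%:R * 'X^8.
Proof. by rewrite /c4 !big_ord_recr big_ord0 /= -!mul_polyC !rmorph_int; ring. Qed.

Lemma coef_c4M (p : {poly 'Z_4}) n :
  (c4 * p)`_n = \sum_(i < 9 | (i <= n)%N) (cpoly`_i)%:~R * p`_(n - i).
Proof.
rewrite /c4 mulr_suml coef_sum [RHS]big_mkcond; apply: eq_bigr => i _.
by rewrite -mul_polyC -mulrA coefCM coefXnM ltnNge; case: leqP; rewrite ?mulr0.
Qed.

Lemma c4_plinv3 : c4 * plinv 4 3 = plinv 2 3 \Po 'X^2.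
Proof.
(* W is the difference of the two sides over the integers, divided by 4. *)
pose W : {poly 'Z_4} := - 'X^3 + 2%:R * 'X^5 + 2%:R * 'X^6 - 5%:R * 'X^8
  - 3%:R * 'X^9 + 2%:R * 'X^10 + 5%:R * 'X^11 + 4%:R * 'X^12 - 4%:R * 'X^13
  - 5%:R * 'X^14 - 2%:R * 'X^15 + 3%:R * 'X^16 + 5%:R * 'X^17 - 2%:R * 'X^19
  - 2%:R * 'X^20 + 'X^22.
rewrite -[RHS]addr0 -(mul0r W) -natr4_polyZ4 c4E /W; unfold plinv.
rewrite /index_iota /= !big_cons !big_nil !rmorphM rmorph1 !rmorphXn /= !comp_1subXn.
by rewrite /minn /=; ring.
Qed.

Lemma c4_plinv N : (3 <= N)%N -> c4 * plinv 4 N = plinv 2 N \Po 'X^2.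
Proof.
elim: N => // N IH; rewrite leq_eqVlt ltnS => /predU1P[<- | hN].
  exact: c4_plinv3.
unfold plinv; rewrite big_nat_recr //= [X in _ = X \Po _]big_nat_recr //=.
rewrite rmorphM rmorphXn /= comp_1subXn mulrA -/(plinv 4 N) -/(plinv 2 N) IH //.
rewrite (minn_idPl _) // (minn_idPl _); last exact: leqW (ltnW hN).
by rewrite exprM one_sub_exp4 // natr4_polyZ4.
Qed.

Lemma c4_plinv_upto n : eq_upto n (c4 * plinv 4 n) (plinv 2 n \Po 'X^2).
Proof.
apply: (@eq_upto_trans _ _ _ (c4 * plinv 4 (n + 3))).
  by apply: eq_upto_mul => //; apply: eq_upto_sym; apply: plinv_upto; rewrite leq_addr.
rewrite c4_plinv ?leq_addl //.
by apply: eq_upto_comp_Xn => //; apply: plinv_upto; rewrite leq_addr.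
Qed.

Lemma plgen4_upto n : eq_upto n (plgen 4 n) (c4 * (plgen 2 n \Po 'X^2)).
Proof.
apply: eq_upto_plgen; rewrite mulrC mulrA.
apply: (@eq_upto_trans _ _ _ ((plinv 2 n \Po 'X^2) * (plgen 2 n \Po 'X^2))).
  by apply: eq_upto_mul => //; rewrite mulrC; apply: c4_plinv_upto.
rewrite -rmorphM mulrC -(rmorph1 (comp_poly ('X^2 : {poly 'Z_4}))).
by apply: eq_upto_comp_Xn => //; apply: plgen_mul_plinv.
Qed.

Lemma coef_plgen2_comp_X2 (R : comNzRingType) n k : (k <= n)%N ->
  (plgen 2 n \Po 'X^2)`_k = (pl2_even k)%:~R :> R.
Proof.
move=> hk; rewrite coef_comp_poly_Xn // /pl2_even dvdn2 divn2.
case: (odd k) => //=; rewrite pl_intr; symmetry; apply: plgen_upto => //.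
by apply: leq_trans hk; rewrite -divn2 leq_div.
Qed.

Theorem mainTheorem6 : forall n : nat, (pl 4 n = rhs_coef n %[mod 4])%Z.
Proof.
move=> n; apply: intr_Zp_eqmod => //.
rewrite pl_intr plgen4_upto // coef_c4M /rhs_coef rmorph_sum.
by apply: eq_bigr => i _; rewrite rmorphM coef_plgen2_comp_X2 ?leq_subr.
Qed.
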